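(* Let $n \geq 1$. The model $U(n)_{\wedge,\to}$ consists exactly of those points $x \in U(n)$ such that every $y \in U(n)$ with $y \geq x$ is separated.
   Context: Fix $n\ge1$ and variables $p_1,\dots,p_n$; $2^n=\{0,1\}^n$ with componentwise order. A model is $(M,\le,c)$, $(M,\le)$ a poset, $c:M\to 2^n$ order-preserving, with intuitionistic Kripke semantics ($x\models p_i$ iff $c(x)_i=1$; $x\models\varphi\to\psi$ iff every $y\ge x$ satisfying $\varphi$ satisfies $\psi$; etc.). A p-morphism of models is an order- and colour-preserving map $f$ such that $f(x)\le y$ implies $f(x')=y$ for some $x'\ge x$. A generated submodel is an up-set with the restricted structure. A point $x$ is separated if for some variable $q$, $x\not\models q$ but all $y>x$ satisfy $q$. $M^s$ is the set of separated points of $M$ with restricted order and colouring; all chains in $M^s$ have at most $n$ elements. $U(n)$, the $n$-universal model: take the canonical model of IPC on $p_1,\dots,p_n$ (points are the prime filters of the free Heyting algebra on $p_1,\dots,p_n$, ordered by inclusion, with $c(x)_i=1$ iff $p_i\in x$) and let $U(n)$ be its generated submodel of points $x$ with finite up-set ${\uparrow}x$. It is a standard fact that for every model $N$ of finite depth (chains of bounded finite length) there is a unique p-morphism $N\to U(n)$. For a model $M$, let $f:M^s\to U(n)$ be the unique p-morphism and define $M_{\wedge,\to}:=f(M^s)$, a generated submodel of $U(n)$. In particular $U(n)_{\wedge,\to}$ is this construction applied to $M=U(n)$. *)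

(* Kripke models for IPC on variables p_0,...,p_{n-1}
   (the paper's p_1..p_n, shifted to 0-based indices). *)
From Stdlib Require Import List.



Record model := Model {
  pt : Type;
  le : pt -> pt -> Prop;
  col : pt -> nat -> Prop   (* col x i  <->  c(x)_i = 1, i.e. x |= p_i *)
}.

Definition lt (M : model) (x y : pt M) : Prop := le M x y /\ x <> y.

Definition pmorph (n : nat) (M N : model) (f : pt M -> pt N) : Prop :=
  (forall x y, le M x y -> le N (f x) (f y)) /\
  (forall x i, i < n -> (col N (f x) i <-> col M x i)) /\
  (forall x y, le N (f x) y -> exists x', le M x x' /\ f x' = y).

Definition separated (n : nat) (M : model) (x : pt M) : Prop :=
  exists q, q < n /\ ~ col M x q /\ (forall y, lt M x y -> col M y q).

Definition sep_model (n : nat) (M : model) : model :=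
  {| pt := { x : pt M | separated n M x };
     le := fun x y => le M (proj1_sig x) (proj1_sig y);
     col := fun x i => col M (proj1_sig x) i |}.

Inductive form : Type :=
| Var : nat -> form
| Bot : form
| And : form -> form -> form
| Or  : form -> form -> form
| Imp : form -> form -> form.

Fixpoint wf (n : nat) (f : form) : Prop :=
  match f with
  | Var i => i < n
  | Bot => True
  | And a b | Or a b | Imp a b => wf n a /\ wf n b
  end.

Inductive Der (G : form -> Prop) : form -> Prop :=
| D_hyp : forall a, G a -> Der G a
| D_K : forall a b, Der G (Imp a (Imp b a))
| D_S : forall a b c,
    Der G (Imp (Imp a (Imp b c)) (Imp (Imp a b) (Imp a c)))
| D_and1 : forall a b, Der G (Imp (And a b) a)
| D_and2 : forall a b, Der G (Imp (And a b) b)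
| D_andI : forall a b, Der G (Imp a (Imp b (And a b)))
| D_or1 : forall a b, Der G (Imp a (Or a b))
| D_or2 : forall a b, Der G (Imp b (Or a b))
| D_orE : forall a b c,
    Der G (Imp (Imp a c) (Imp (Imp b c) (Imp (Or a b) c)))
| D_efq : forall a, Der G (Imp Bot a)
| D_mp : forall a b, Der G (Imp a b) -> Der G a -> Der G b.

(** prime theories over p_0..p_{n-1} = prime filters of the free Heyting
    algebra on n generators (via the Lindenbaum-Tarski algebra) *)
Definition prime_theory (n : nat) (G : form -> Prop) : Prop :=
  (forall a, G a -> wf n a) /\
  (forall a, wf n a -> Der G a -> G a) /\
  ~ G Bot /\
  (forall a b, G (Or a b) -> G a \/ G b).

Definition can_pt (n : nat) : Type := { G : form -> Prop | prime_theory n G }.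

Definition canonical_model (n : nat) : model :=
  {| pt := can_pt n;
     le := fun x y => forall a, proj1_sig x a -> proj1_sig y a;
     col := fun x i => proj1_sig x (Var i) |}.

Definition finite_up (M : model) (x : pt M) : Prop :=
  exists l : list (pt M), forall y, le M x y -> In y l.

Definition U (n : nat) : model :=
  {| pt := { x : pt (canonical_model n) | finite_up (canonical_model n) x };
     le := fun x y => le (canonical_model n) (proj1_sig x) (proj1_sig y);
     col := fun x i => col (canonical_model n) (proj1_sig x) i |}.

(** M_{wedge,->} := f(M^s) for the (unique) p-morphism f : M^s -> U(n) *)
Definition M_and_imp (n : nat) (M : model) (x : pt (U n)) : Prop :=
  exists f : pt (sep_model n M) -> pt (U n),
    pmorph n (sep_model n M) (U n) f /\ exists s, f s = x.

(* If [f : U(n)^s -> U(n)] is a p-morphism, every point above [f s] is some [f s']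
   with [s'] separated, and p-morphisms preserve separatedness.  Conversely, the map
   sending a point of [U(n)^s] to its theory is a p-morphism into [U(n)]: its values
   have finite up-sets and it has the back property because [U(n)^s] has finite up-sets
   (induction on the size of the up-set, with primality of the target theory in the
   inductive step).  If every point above [x] is separated, forcing at [x] is the same in
   [U(n)^s] and in [U(n)], so by the truth lemma for [U(n)] the theory of [x] is [x]. *)

From Stdlib Require Import List Lia Cantor Classical ClassicalEpsilon
  FunctionalExtensionality PropExtensionality ProofIrrelevance.

Lemma proj1_sig_inj (A : Type) (P : A -> Prop) (u v : {a : A | P a}) :
  proj1_sig u = proj1_sig v -> u = v.
Proof. apply eq_sig_hprop; intros; apply proof_irrelevance. Qed.

Fixpoint forces (M : model) (x : pt M) (a : form) : Prop :=
  match a with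
  | Var i => col M x i
  | Bot => False
  | And a b => forces M x a /\ forces M x b
  | Or a b => forces M x a \/ forces M x b
  | Imp a b => forall y, le M x y -> forces M y a -> forces M y b
  end.

Section Soundness.
Variable M : model.
Hypothesis le_refl : forall x, le M x x.
Hypothesis le_trans : forall x y z, le M x y -> le M y z -> le M x z.
Hypothesis col_mono : forall x y i, le M x y -> col M x i -> col M y i.

Lemma forces_mono a x y : le M x y -> forces M x a -> forces M y a.
Proof.
  revert x y; induction a; simpl; intros x y Hxy H; try tauto.
  - eauto.
  - destruct H; split; eauto.
  - destruct H; [left | right]; eauto.
  - intros z Hyz; apply H; eauto.
Qed.

Lemma forces_Der G a :
  Der G a -> forall x, (forall g, G g -> forces M x g) -> forces M x a.
Proof.
  induction 1; intros x HG; simpl.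
  - exact (HG a H).
  - intros y _ Ha z Hyz _; exact (forces_mono _ _ _ Hyz Ha).
  - intros y _ Habc z Hyz Hab w Hzw Ha.
    apply (Habc w (le_trans _ _ _ Hyz Hzw) Ha w (le_refl w)).
    exact (Hab w Hzw Ha).
  - intros y _ [Ha _]; exact Ha.
  - intros y _ [_ Hb]; exact Hb.
  - intros y _ Ha z Hyz Hb; split; [exact (forces_mono _ _ _ Hyz Ha) | exact Hb].
  - intros y _ Ha; left; exact Ha.
  - intros y _ Hb; right; exact Hb.
  - intros y _ Hac z Hyz Hbc w Hzw [Ha | Hb].
    + exact (Hac w (le_trans _ _ _ Hyz Hzw) Ha).
    + exact (Hbc w Hzw Hb).
  - intros y _ Hbot; contradiction Hbot.
  - exact (IHDer1 x HG x (le_refl x) (IHDer2 x HG)).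
Qed.

End Soundness.

Lemma Der_weaken G G' a : (forall c, G c -> G' c) -> Der G a -> Der G' a.
Proof. intros HG; induction 1; eauto using Der. Qed.

Lemma Der_imp_refl G a : Der G (Imp a a).
Proof. exact (D_mp _ _ _ (D_mp _ _ _ (D_S G a (Imp a a) a) (D_K _ _ _)) (D_K _ _ _)). Qed.

Lemma Der_deduction G c d : Der (fun x => G x \/ x = c) d -> Der G (Imp c d).
Proof.
  induction 1 as [a [Ha | ->] | | | | | | | | | | a b _ IHab _ IHa];
    [ exact (D_mp _ _ _ (D_K _ _ _) (D_hyp _ _ Ha))
    | apply Der_imp_refl
    | apply (D_mp _ _ _ (D_K _ _ _));
      eauto using D_K, D_S, D_and1, D_and2, D_andI, D_or1, D_or2, D_orE, D_efq ..
    | exact (D_mp _ _ _ (D_mp _ _ _ (D_S _ _ _ _) IHab) IHa) ].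
Qed.

Fixpoint nat_of_form (f : form) : nat :=
  match f with
  | Var i => to_nat (0, i)
  | Bot => to_nat (1, 0)
  | And a b => to_nat (2, to_nat (nat_of_form a, nat_of_form b))
  | Or a b => to_nat (3, to_nat (nat_of_form a, nat_of_form b))
  | Imp a b => to_nat (4, to_nat (nat_of_form a, nat_of_form b))
  end.

Lemma to_nat_inj p q : to_nat p = to_nat q -> p = q.
Proof. intro H; rewrite <- (cancel_of_to p), <- (cancel_of_to q), H; reflexivity. Qed.

Lemma nat_of_form_inj a b : nat_of_form a = nat_of_form b -> a = b.
Proof.
  revert b; induction a; destruct b; cbn [nat_of_form]; intro H;
    apply to_nat_inj in H; try discriminate H; try reflexivity.
  1: injection H as ->; reflexivity.
  all: apply (f_equal snd) in H; cbn [snd] in H;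
    apply to_nat_inj in H; injection H as H1 H2;
    rewrite (IHa1 _ H1), (IHa2 _ H2); reflexivity.
Qed.

Definition form_of_nat (k : nat) : form :=
  epsilon (inhabits Bot) (fun f => nat_of_form f = k).

Lemma form_of_nat_of_form f : form_of_nat (nat_of_form f) = f.
Proof.
  apply nat_of_form_inj.
  exact (epsilon_spec (inhabits Bot) (fun g => nat_of_form g = nat_of_form f)
           (ex_intro _ f eq_refl)).
Qed.

Section Lindenbaum.
Variables (n : nat) (Gamma : form -> Prop) (b : form).

Fixpoint chain (k : nat) : form -> Prop :=
  match k with
  | 0 => Gamma
  | S k => fun c => chain k c \/
      (c = form_of_nat k /\ wf n c /\ ~ Der (fun x => chain k x \/ x = c) b)
  end.

Definition limit (c : form) : Prop := exists k, chain k c.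

Lemma chain_mono k m c : k <= m -> chain k c -> chain m c.
Proof. induction 1; simpl; auto. Qed.

Lemma Der_limit_chain c : Der limit c -> exists k, Der (chain k) c.
Proof.
  induction 1 as [c [k Hk] | | | | | | | | | | c d _ [k1 H1] _ [k2 H2]];
    try (exists 0; eauto using Der; fail).
  - exists k; exact (D_hyp _ _ Hk).
  - exists (max k1 k2).
    apply (D_mp _ c); [revert H1 | revert H2]; apply Der_weaken;
      intros e; apply chain_mono; lia.
Qed.

Hypothesis Gamma_wf : forall c, Gamma c -> wf n c.
Hypothesis Gamma_not_Der : ~ Der Gamma b.

Lemma chain_not_Der k : ~ Der (chain k) b.
Proof.
  induction k as [| k IHk]; simpl; [exact Gamma_not_Der |]; intro HD.
  destruct (classic (wf n (form_of_nat k) /\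
             ~ Der (fun x => chain k x \/ x = form_of_nat k) b)) as [[_ Hnd] | Hskip].
  - apply Hnd; revert HD; apply Der_weaken; intros c [Hc | [-> _]]; auto.
  - apply IHk; revert HD; apply Der_weaken; intros c [Hc | [-> Hnew]]; tauto.
Qed.

Lemma limit_not_Der : ~ Der limit b.
Proof. intro HD; destruct (Der_limit_chain _ HD) as [k Hk]; exact (chain_not_Der k Hk). Qed.

Lemma limit_wf c : limit c -> wf n c.
Proof. intros [k Hk]; revert c Hk; induction k; simpl; firstorder congruence. Qed.

(* Every well-formed [c] is examined at stage [nat_of_form c + 1]. *)
Lemma limit_maximal c : wf n c -> ~ Der (fun x => limit x \/ x = c) b -> limit c.
Proof.
  intros Hc Hnd; exists (S (nat_of_form c)); simpl; right.
  rewrite form_of_nat_of_form; repeat split; auto.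
  intro HD; apply Hnd; revert HD; apply Der_weaken.
  intros x [Hx | Hx]; [left; exists (nat_of_form c) | right]; auto.
Qed.

Lemma limit_Der_closed c : wf n c -> Der limit c -> limit c.
Proof.
  intros Hc HD; apply limit_maximal; auto; intro Hcb.
  exact (limit_not_Der (D_mp _ _ _ (Der_deduction _ _ _ Hcb) HD)).
Qed.

Lemma limit_prime : prime_theory n limit.
Proof.
  split; [exact limit_wf | split; [exact limit_Der_closed | split]].
  - intro Hbot; exact (limit_not_Der (D_mp _ _ _ (D_efq _ _) (D_hyp _ _ Hbot))).
  - intros c d Hcd; destruct (limit_wf _ Hcd) as [Hwc Hwd].
    apply NNPP; intros Hn; apply limit_not_Der.
    assert (Hc : Der limit (Imp c b))
      by (apply Der_deduction, NNPP; intro; apply Hn; left; apply limit_maximal; auto).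
    assert (Hd : Der limit (Imp d b))
      by (apply Der_deduction, NNPP; intro; apply Hn; right; apply limit_maximal; auto).
    exact (D_mp _ _ _ (D_mp _ _ _ (D_mp _ _ _ (D_orE _ _ _ _) Hc) Hd) (D_hyp _ _ Hcd)).
Qed.

End Lindenbaum.

Lemma lindenbaum n Gamma b :
  (forall c, Gamma c -> wf n c) -> ~ Der Gamma b ->
  exists D, prime_theory n D /\ (forall c, Gamma c -> D c) /\ ~ D b.
Proof.
  intros Hwf Hnd; exists (limit n Gamma b); split; [exact (limit_prime _ _ _ Hwf Hnd) | split].
  - intros c Hc; exists 0; exact Hc.
  - intro Hb; exact (limit_not_Der _ _ _ Hnd (D_hyp _ _ Hb)).
Qed.

Section PrimeTheory.
Variables (n : nat) (G : form -> Prop).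
Hypothesis G_prime : prime_theory n G.

Lemma prime_theory_wf a : G a -> wf n a.
Proof. apply G_prime. Qed.

Lemma prime_theory_Der a : wf n a -> Der G a -> G a.
Proof. apply G_prime. Qed.

Lemma prime_theory_mp a b : G (Imp a b) -> G a -> G b.
Proof.
  intros Hab Ha; apply prime_theory_Der.
  - exact (proj2 (prime_theory_wf _ Hab)).
  - exact (D_mp _ _ _ (D_hyp _ _ Hab) (D_hyp _ _ Ha)).
Qed.

Lemma prime_theory_and a b : G (And a b) <-> G a /\ G b.
Proof.
  split.
  - intro H; destruct (prime_theory_wf _ H).
    split; apply prime_theory_Der; eauto using Der.
  - intros [Ha Hb]; apply prime_theory_Der.
    + split; apply prime_theory_wf; auto.
    + exact (D_mp _ _ _ (D_mp _ _ _ (D_andI _ _ _) (D_hyp _ _ Ha)) (D_hyp _ _ Hb)).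
Qed.

Lemma prime_theory_or a b : wf n a -> wf n b -> G (Or a b) <-> G a \/ G b.
Proof.
  intros Hwa Hwb; split; [apply G_prime |].
  intros [H | H]; apply prime_theory_Der; try split; auto; eauto using Der.
Qed.

Lemma prime_theory_bigor L : G (fold_right Or Bot L) -> exists a, In a L /\ G a.
Proof.
  induction L as [| a L IHL]; simpl; [intro H; destruct (proj1 (proj2 (proj2 G_prime)) H) |].
  intro H; destruct (proj2 (proj2 (proj2 G_prime)) _ _ H) as [Ha | HL].
  - eauto.
  - destruct (IHL HL) as [c [Hc HGc]]; eauto.
Qed.

End PrimeTheory.

Lemma can_pt_ext n (x y : can_pt n) :
  (forall a, proj1_sig x a <-> proj1_sig y a) -> x = y.
Proof.
  intro E; apply proj1_sig_inj; extensionality a; apply propositional_extensionality, E.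
Qed.

Lemma U_pt_ext n (x y : pt (U n)) :
  (forall a, proj1_sig (proj1_sig x) a <-> proj1_sig (proj1_sig y) a) -> x = y.
Proof. intro E; apply proj1_sig_inj, can_pt_ext, E. Qed.

Lemma finite_up_mono (M : model) x y :
  (forall x y z, le M x y -> le M y z -> le M x z) ->
  le M x y -> finite_up M x -> finite_up M y.
Proof. intros Htrans Hxy [l Hl]; exists l; eauto. Qed.

Lemma U_forces n (x : pt (U n)) a :
  wf n a -> (forces (U n) x a <-> proj1_sig (proj1_sig x) a).
Proof.
  revert x; induction a as [i | | a1 IH1 a2 IH2 | a1 IH1 a2 IH2 | a1 IH1 a2 IH2];
    intros [[X HX] Hfin] Hw; simpl in *.
  - reflexivity.
  - split; [intros [] | apply HX].
  - destruct Hw as [Hw1 Hw2].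
    rewrite (IH1 (exist _ (exist _ X HX) Hfin) Hw1), (IH2 (exist _ (exist _ X HX) Hfin) Hw2).
    symmetry; exact (prime_theory_and _ _ HX a1 a2).
  - destruct Hw as [Hw1 Hw2].
    rewrite (IH1 (exist _ (exist _ X HX) Hfin) Hw1), (IH2 (exist _ (exist _ X HX) Hfin) Hw2).
    symmetry; exact (prime_theory_or _ _ HX a1 a2 Hw1 Hw2).
  - destruct Hw as [Hw1 Hw2]; split.
    + intro Hf; apply NNPP; intro Hn.
      destruct (lindenbaum n (fun c => X c \/ c = a1) a2) as [D [HD [HXD HDa2]]].
      { intros c [Hc | ->]; [exact (prime_theory_wf _ _ HX _ Hc) | exact Hw1]. }
      { intro HDer; apply Hn, (prime_theory_Der _ _ HX); [split; auto |].
        exact (Der_deduction _ _ _ HDer). }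
      assert (HXD' : le (canonical_model n) (exist _ X HX) (exist _ D HD))
        by (intros c Hc; apply HXD; auto).
      set (d := exist _ (exist _ D HD)
                  (finite_up_mono (canonical_model n) _ _
                     (fun _ _ _ H1 H2 c Hc => H2 c (H1 c Hc)) HXD' Hfin)
                : pt (U n)).
      apply HDa2, (IH2 d Hw2), Hf; [exact HXD' |].
      apply (IH1 d Hw1), HXD; auto.
    + intros HX12 y Hxy Hy1; apply (IH2 y Hw2).
      apply (prime_theory_mp _ _ (proj2_sig (proj1_sig y)) a1); [apply Hxy, HX12 |].
      apply (IH1 y Hw1), Hy1.
Qed.

Lemma sep_model_forces n (M : model) (x : pt M) (hx : separated n M x) a :
  (forall x y z, le M x y -> le M y z -> le M x z) ->
  (forall y, le M x y -> separated n M y) ->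
  (forces (sep_model n M) (exist _ x hx) a <-> forces M x a).
Proof.
  intros Htrans; revert x hx; induction a as [i | | a1 IH1 a2 IH2 | a1 IH1 a2 IH2 | a1 IH1 a2 IH2];
    intros x hx Hup; simpl.
  - reflexivity.
  - reflexivity.
  - rewrite (IH1 x hx Hup), (IH2 x hx Hup); reflexivity.
  - rewrite (IH1 x hx Hup), (IH2 x hx Hup); reflexivity.
  - assert (Hup' : forall y, le M x y -> forall z, le M y z -> separated n M z) by eauto.
    split.
    + intros Hf y Hxy Hy1.
      apply (IH2 y (Hup y Hxy) (Hup' y Hxy)), (Hf (exist _ y (Hup y Hxy)) Hxy).
      apply (IH1 y _ (Hup' y Hxy)), Hy1.
    + intros Hf [y hy] Hxy Hy1; simpl in Hxy.
      apply (IH2 y hy (Hup' y Hxy)), Hf, (IH1 y hy (Hup' y Hxy)); assumption.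
Qed.

Lemma forces_bigor (M : model) (x : pt M) a L :
  In a L -> forces M x a -> forces M x (fold_right Or Bot L).
Proof. induction L as [| c L IHL]; simpl; [tauto |]; intros [-> | HL] Ha; auto. Qed.

Section TheoryMap.
Variables (n : nat) (M : model).
Hypothesis le_refl : forall x, le M x x.
Hypothesis le_trans : forall x y z, le M x y -> le M y z -> le M x z.
Hypothesis le_antisym : forall x y, le M x y -> le M y x -> x = y.
Hypothesis col_mono : forall x y i, le M x y -> col M x i -> col M y i.
Hypothesis M_finite_up : forall x, finite_up M x.

Definition theory (x : pt M) (a : form) : Prop := wf n a /\ forces M x a.

Lemma theory_prime x : prime_theory n (theory x).
Proof.
  split; [| split; [| split]].
  - intros a [Hw _]; exact Hw.
  - intros a Hw HD; split; [exact Hw |].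
    apply (forces_Der M le_refl le_trans col_mono _ _ HD); intros g [_ Hg]; exact Hg.
  - intros [_ []].
  - intros a b [[Hwa Hwb] [Ha | Hb]]; [left | right]; split; assumption.
Qed.

Lemma theory_mono x y a : le M x y -> theory x a -> theory y a.
Proof.
  intros Hxy [Hw Ha]; split; [exact Hw | exact (forces_mono M le_trans col_mono a x y Hxy Ha)].
Qed.

(* A [phi] of [G] outside the theory of [x] would put [phi -> \/_u psi_u] in that theory,
   with [psi_u] forced at the strict successor [u] but not in [G], contradicting primality. *)
Lemma theory_back_stuck x G :
  prime_theory n G -> (forall a, theory x a -> G a) ->
  (forall u, lt M x u -> ~ (forall a, theory u a -> G a)) ->
  forall a, G a -> theory x a.
Proof.
  intros HG Hsub Hstuck phi Hphi; apply NNPP; intro Hnphi.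
  assert (Hwitness : forall u, exists psi, wf n psi /\ ~ G psi /\ (lt M x u -> forces M u psi)).
  { intro u; destruct (classic (lt M x u)) as [Hxu | Hnxu].
    - destruct (not_all_ex_not _ _ (Hstuck u Hxu)) as [psi Hpsi].
      apply imply_to_and in Hpsi; destruct Hpsi as [[Hw Hu] HnG]; eauto.
    - exists Bot; repeat split; [apply HG | contradiction]. }
  destruct (choice _ Hwitness) as [psi Hpsi].
  destruct (M_finite_up x) as [l Hl].
  set (Psi := fold_right Or Bot (map psi l)).
  assert (HwPsi : wf n Psi).
  { unfold Psi; clear Hl; induction l; simpl; [exact I | split; [apply Hpsi | exact IHl]]. }
  assert (HxPsi : theory x (Imp phi Psi)).
  { split; [split; [exact (prime_theory_wf _ _ HG _ Hphi) | exact HwPsi] |].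
    intros y Hxy Hyphi; destruct (classic (x = y)) as [<- | Hne].
    - contradiction Hnphi; split; [exact (prime_theory_wf _ _ HG _ Hphi) | exact Hyphi].
    - apply forces_bigor with (psi y); [apply in_map, Hl, Hxy | apply Hpsi; split; auto]. }
  destruct (prime_theory_bigor _ _ HG (map psi l)) as [c [Hc HGc]].
  { exact (prime_theory_mp _ _ HG _ _ (Hsub _ HxPsi) Hphi). }
  apply in_map_iff in Hc; destruct Hc as [u [<- _]]; exact (proj1 (proj2 (Hpsi u)) HGc).
Qed.

Lemma theory_back_aux k x l G :
  length l <= k -> (forall y, le M x y -> In y l) ->
  prime_theory n G -> (forall a, theory x a -> G a) ->
  exists y, le M x y /\ forall a, G a <-> theory y a.
Proof.
  revert x l; induction k as [| k IHk]; intros x l Hlen Hl HG Hsub.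
  { destruct l; [destruct (Hl x (le_refl x)) | simpl in Hlen; lia]. }
  destruct (classic (exists u, lt M x u /\ forall a, theory u a -> G a))
    as [[u [[Hxu Hne] Hu]] | Hstuck].
  - destruct (IHk u (remove (fun y z => excluded_middle_informative (y = z)) x l))
      as [y [Huy Hy]]; auto.
    + pose proof (remove_length_lt (fun y z => excluded_middle_informative (y = z)) l x
                    (Hl x (le_refl x))); lia.
    + intros y Huy; apply in_in_remove; [| apply Hl; eauto].
      intros ->; exact (Hne (le_antisym _ _ Hxu Huy)).
    + exists y; split; eauto.
  - exists x; split; [apply le_refl |]; intro a; split; [| apply Hsub].
    apply (theory_back_stuck x G HG Hsub); eauto.
Qed.

Lemma theory_back x G :
  prime_theory n G -> (forall a, theory x a -> G a) ->
  exists y, le M x y /\ forall a, G a <-> theory y a.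
Proof.
  destruct (M_finite_up x) as [l Hl]; exact (theory_back_aux (length l) x l G (le_n _) Hl).
Qed.

Definition theory_pt (x : pt M) : can_pt n := exist _ (theory x) (theory_prime x).

Lemma theory_pt_finite_up x : finite_up (canonical_model n) (theory_pt x).
Proof.
  destruct (M_finite_up x) as [l Hl]; exists (map theory_pt l).
  intros [G HG] HxG; destruct (theory_back x G HG HxG) as [y [Hxy Hy]].
  apply in_map_iff; exists y; split; [apply can_pt_ext; firstorder | exact (Hl y Hxy)].
Qed.

Definition theory_map (x : pt M) : pt (U n) := exist _ (theory_pt x) (theory_pt_finite_up x).

Lemma theory_map_pmorph : pmorph n M (U n) theory_map.
Proof.
  split; [| split].
  - intros x y Hxy a; exact (theory_mono x y a Hxy).
  - intros x i Hi; simpl; unfold theory; simpl; tauto.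
  - intros x y Hxy; destruct (theory_back x _ (proj2_sig (proj1_sig y)) Hxy) as [x' [Hxx' Hx']].
    exists x'; split; [exact Hxx' | apply U_pt_ext; firstorder].
Qed.

End TheoryMap.

Lemma pmorph_separated n (M N : model) (f : pt M -> pt N) x :
  pmorph n M N f -> separated n M x -> separated n N (f x).
Proof.
  intros [_ [Hcol Hback]] [q [Hq [Hnq Hup]]]; exists q; split; [exact Hq | split].
  - rewrite Hcol; assumption.
  - intros z [Hfxz Hne]; destruct (Hback x z Hfxz) as [x' [Hxx' <-]].
    apply Hcol; [exact Hq |]; apply Hup; split; [exact Hxx' | intros <-; exact (Hne eq_refl)].
Qed.

Lemma sep_model_separated n (M : model) (s : pt (sep_model n M)) :
  separated n (sep_model n M) s.
Proof.
  destruct s as [x [q [Hq [Hnq Hup]]]].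
  exists q; split; [exact Hq | split; [exact Hnq |]].
  intros [y hy] [Hxy Hne]; apply Hup; split; [exact Hxy |].
  intro Exy; apply Hne, proj1_sig_inj; exact Exy.
Qed.

Lemma finite_up_injective (M N : model) (f : pt M -> pt N) x :
  (forall y z, f y = f z -> y = z) -> (forall y z, le M y z -> le N (f y) (f z)) ->
  finite_up N (f x) -> finite_up M x.
Proof.
  intros Hinj Hmono [l Hl].
  exists (map (fun c => epsilon (inhabits x) (fun y => f y = c)) l).
  intros y Hxy; apply in_map_iff; exists (f y); split; [| apply Hl, Hmono, Hxy].
  apply Hinj; exact (epsilon_spec (inhabits x) (fun z => f z = f y) (ex_intro _ y eq_refl)).
Qed.

Lemma sep_model_U_le_antisym n (s t : pt (sep_model n (U n))) :
  le _ s t -> le _ t s -> s = t.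
Proof. intros Hst Hts; apply proj1_sig_inj, U_pt_ext; firstorder. Qed.

Lemma sep_model_U_finite_up n (s : pt (sep_model n (U n))) :
  finite_up (sep_model n (U n)) s.
Proof.
  apply (finite_up_injective (sep_model n (U n)) (canonical_model n)
           (fun t => proj1_sig (proj1_sig t))).
  - intros t u E; apply proj1_sig_inj, proj1_sig_inj, E.
  - intros t u Htu; exact Htu.
  - exact (proj2_sig (proj1_sig s)).
Qed.

Lemma sep_model_U_theory n (x : pt (U n)) (hx : separated n (U n) x) a :
  (forall y, le (U n) x y -> separated n (U n) y) ->
  theory n (sep_model n (U n)) (exist _ x hx) a <-> proj1_sig (proj1_sig x) a.
Proof.
  intro Hup; unfold theory.
  rewrite sep_model_forces by (auto; intros y z w Hyz Hzw c Hc; exact (Hzw c (Hyz c Hc))).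
  split.
  - intros [Hw Ha]; exact (proj1 (U_forces n x a Hw) Ha).
  - intro Ha; pose proof (prime_theory_wf _ _ (proj2_sig (proj1_sig x)) a Ha) as Hw.
    exact (conj Hw (proj2 (U_forces n x a Hw) Ha)).
Qed.

Theorem proposition3p7 (n : nat) (hn : 1 <= n) (x : pt (U n)) :
  M_and_imp n (U n) x <->
  (forall y : pt (U n), le (U n) x y -> separated n (U n) y).
Proof.
  split.
  - intros [f [Hf [s <-]]] y Hy.
    destruct (proj2 (proj2 Hf) s y Hy) as [s' [_ <-]].
    exact (pmorph_separated n _ _ f s' Hf (sep_model_separated n _ s')).
  - intro Hup.
    exists (theory_map n (sep_model n (U n)) (fun s a Ha => Ha)
              (fun s t u Hst Htu a Ha => Htu a (Hst a Ha))
              (@sep_model_U_le_antisym n) (fun s t i Hst => Hst (Var i))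
              (@sep_model_U_finite_up n)).
    split; [apply theory_map_pmorph |].
    exists (exist _ x (Hup x (fun a Ha => Ha))).
    apply U_pt_ext; exact (fun a => sep_model_U_theory n x _ a Hup).
Qed.
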